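(* For $i\in\mathbb N$ and $j\in\mathbb N$ define $$l_{i,j}=\sum_{k=0}^{i-j}\binom{\frac{i-1}{2}+x-k}{k}\binom{\frac{i-1}{2}+k-x}{i-j-k}$$ (a quantity independent of $x$; equal to $0$ when $j>i$, as an empty sum). Then $l_{i,0}=(-1)^i$ and $l_{i,i}=1$ for all $i\in\mathbb N$, and $l_{i,j}=l_{i-1,j-1}+l_{i-1,j}$ for all $i\ge1$ and $1\le j\le i$.
   Context: For $z\in\mathbb C$ and $k\in\mathbb N$, $\binom{z}{k}=\frac{z(z-1)\cdots(z-k+1)}{k!}$. The sum defining $l_{i,j}$ is a polynomial in $x$ which is constant in $x$, so $l_{i,j}$ is a well-defined number (e.g. its value at $x=0$). *)

From mathcomp Require Import all_boot all_order all_algebra.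
Set Implicit Arguments. Unset Strict Implicit. Unset Printing Implicit Defensive.
Import Order.TTheory GRing.Theory Num.Theory.
Local Open Scope ring_scope.

Definition gbinom (R : numFieldType) (z : R) (k : nat) : R :=
  (\prod_(m < k) (z - m%:R)) / (k`!)%:R.

Definition lcoef (R : numFieldType) (i j : nat) (x : R) : R :=
  if (j <= i)%N then
    \sum_(0 <= k < (i - j).+1)
      gbinom ((i%:R - 1) / 2 + x - k%:R) k *
      gbinom ((i%:R - 1) / 2 + k%:R - x) (i - j - k)
  else 0.

(** The sum defining [lcoef i j x] is a convolution
    [C(a, b, n) = \sum_k binom (a - k) k * binom (b + k) (n - k)] with
    [a = c + x], [b = c - x].  Pascal's rule for the generalized binomial,
    applied in the first or in the second factor, gives two recurrences for
    [C]; combining them shows [C(a, b, n) = C(a - 1, b + 1, n)], so [C] is a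
    polynomial in [x] of period 1, hence constant.  Choosing [x] suitably then
    makes every claim immediate: for [j = 0] and [x = (i + 1)/2] all terms but
    [binom (-1) i = (-1)^i] vanish, and the recurrence in [b] with
    [x = 1/2] is exactly the Pascal recurrence for [l]. *)

From mathcomp Require Import all_boot all_order all_algebra.
From mathcomp Require Import ring.
Set Implicit Arguments. Unset Strict Implicit. Unset Printing Implicit Defensive.
Import Order.TTheory GRing.Theory Num.Theory.
Local Open Scope ring_scope.

Lemma poly_periodic_const (R : numDomainType) (p : {poly R}) :
  (forall z, p.[z + 1] = p.[z]) -> forall z w, p.[z] = p.[w].
Proof.
move=> periodic.
set q := p - (p.[0])%:P.
have root_q (n : nat) : root q n%:R.
  rewrite /root /q !hornerE subr_eq0; apply/eqP.
  by elim: n => [|n IH] //; rewrite -natr1 periodic.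
have q0 : q = 0.
  apply: (@roots_geq_poly_eq0 _ _ [seq n%:R | n <- iota 0 (size q)]).
  - by apply/allP => _ /mapP [n _ ->].
  - by rewrite map_inj_uniq ?iota_uniq // => m n /eqP; rewrite eqr_nat => /eqP.
  - by rewrite size_map size_iota.
have const z : p.[z] = p.[0].
  by apply/eqP; rewrite -subr_eq0; have := horner0 z; rewrite -q0 /q !hornerE => ->.
by move=> z w; rewrite !const.
Qed.

Section GeneralizedBinomial.

Variable R : numFieldType.
Implicit Types (a b c x y z : R) (k m n : nat).

Lemma natr_fact_neq0 k : (k`!)%:R != 0 :> R.
Proof. by rewrite pnatr_eq0 -lt0n fact_gt0. Qed.

Lemma gbinom0 z : gbinom z 0 = 1.
Proof. by rewrite /gbinom big_ord0 fact0 divr1. Qed.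

Lemma gbinomS z k : gbinom z k.+1 = gbinom (z - 1) k.+1 + gbinom (z - 1) k.
Proof.
rewrite /gbinom big_ord_recl big_ord_recr /=.
have -> : \prod_(i < k) (z - (lift ord0 i)%:R) = \prod_(i < k) (z - 1 - i%:R).
  by apply: eq_bigr => i _; rewrite lift0 mulrS opprD addrA.
have kS_neq0 : k.+1%:R != 0 :> R by rewrite pnatr_eq0.
rewrite factS natrM mulrS; field.
by rewrite natr_fact_neq0 -mulrS.
Qed.

Lemma gbinom_nat_small m k : (m < k)%N -> gbinom (m%:R : R) k = 0.
Proof.
by move=> lt_mk; rewrite /gbinom (bigD1 (Ordinal lt_mk)) //= subrr !mul0r.
Qed.

Lemma gbinomN1 k : gbinom (-1 : R) k = (-1) ^+ k.
Proof.
have prodE : \prod_(i < k) (-1 - i%:R) = (-1) ^+ k * (k`!)%:R :> R.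
  elim: k => [|k IH]; first by rewrite big_ord0 fact0 mulr1.
  by rewrite big_ord_recr /= IH factS natrM exprS mulrS; ring.
by rewrite /gbinom prodE mulfK // natr_fact_neq0.
Qed.

Definition gbinom_conv a b n : R :=
  \sum_(k < n.+1) gbinom (a - k%:R) k * gbinom (b + k%:R) (n - k).

Lemma gbinom_conv0 a b : gbinom_conv a b 0 = 1.
Proof. by rewrite /gbinom_conv big_ord1 /= !gbinom0 mulr1. Qed.

Lemma gbinom_convSr a b n :
  gbinom_conv a b n.+1 = gbinom_conv a (b - 1) n.+1 + gbinom_conv a (b - 1) n.
Proof.
rewrite /gbinom_conv big_ord_recr [in X in _ = X + _]big_ord_recr /=.
rewrite subnn !gbinom0 addrAC; congr (_ + _); rewrite -big_split /=.
apply: eq_bigr => k _; rewrite subSn -1?ltnS // gbinomS mulrDr.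
by congr (_ * gbinom _ _ + _ * gbinom _ _); ring.
Qed.

Lemma gbinom_convSl a b n :
  gbinom_conv a b n.+1 = gbinom_conv (a - 1) b n.+1 + gbinom_conv (a - 2) (b + 1) n.
Proof.
rewrite /gbinom_conv big_ord_recl [X in _ = X + _]big_ord_recl /=.
rewrite !subr0 !gbinom0 !mul1r -addrA; congr (_ + _); rewrite -big_split /=.
apply: eq_bigr => k _; rewrite /bump leq0n add1n subSS gbinomS mulrDl.
by congr (gbinom _ _ * gbinom _ _ + gbinom _ _ * gbinom _ _); rewrite mulrS; ring.
Qed.

Lemma gbinom_conv_shift a b n : gbinom_conv a b n = gbinom_conv (a - 1) (b + 1) n.
Proof.
elim: n a b => [|n IH] a b; first by rewrite !gbinom_conv0.
rewrite gbinom_convSl (gbinom_convSr (a - 1) (b + 1)) addrK (IH (a - 1) b).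
by congr (_ + gbinom_conv _ _ _); ring.
Qed.

Definition gbinom_poly (p : {poly R}) k : {poly R} :=
  (\prod_(m < k) (p - (m%:R)%:P)) * ((k`!)%:R^-1)%:P.

Lemma horner_gbinom_poly p k z : (gbinom_poly p k).[z] = gbinom p.[z] k.
Proof.
rewrite /gbinom_poly /gbinom hornerM hornerC horner_prod; congr (_ * _).
by apply: eq_bigr => m _; rewrite !hornerE.
Qed.

Definition gbinom_conv_poly c n : {poly R} :=
  \sum_(k < n.+1) gbinom_poly (c%:P + 'X - (k%:R)%:P) k *
                  gbinom_poly (c%:P - 'X + (k%:R)%:P) (n - k).

Lemma horner_gbinom_conv_poly c n z :
  (gbinom_conv_poly c n).[z] = gbinom_conv (c + z) (c - z) n.
Proof.
rewrite /gbinom_conv_poly /gbinom_conv horner_sum; apply: eq_bigr => k _.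
by rewrite hornerM !horner_gbinom_poly !hornerE.
Qed.

Lemma gbinom_conv_sym_const c n x y :
  gbinom_conv (c + x) (c - x) n = gbinom_conv (c + y) (c - y) n.
Proof.
rewrite -!horner_gbinom_conv_poly; apply: poly_periodic_const => z.
rewrite !horner_gbinom_conv_poly gbinom_conv_shift.
by congr gbinom_conv; ring.
Qed.

Lemma gbinom_conv_natN1 n : gbinom_conv n%:R (-1) n = (-1) ^+ n.
Proof.
rewrite /gbinom_conv big_ord_recl /= subr0 addr0 gbinom0 mul1r subn0 gbinomN1.
rewrite big1 ?addr0 // => k _; rewrite /bump leq0n add1n.
have lt_kn : (k.+1 <= n)%N by [].
have -> : -1 + k.+1%:R = k%:R :> R by rewrite -natr1 addrC addrK.
rewrite -natrB //.
have [small|large] := ltnP (n - k.+1) k.+1.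
  by rewrite (gbinom_nat_small small) mul0r.
by rewrite (gbinom_nat_small large) mulr0.
Qed.

End GeneralizedBinomial.

Section LCoefficients.

Variable R : numFieldType.
Implicit Types (x y : R) (i j : nat).

Lemma lcoefE i j x : (j <= i)%N ->
  lcoef i j x = gbinom_conv ((i%:R - 1) / 2 + x) ((i%:R - 1) / 2 - x) (i - j).
Proof.
move=> le_ji; rewrite /lcoef le_ji big_mkord; apply: eq_bigr => k _.
by rewrite [_ + k%:R - x]addrAC.
Qed.

Lemma lcoef_const i j x y : lcoef i j x = lcoef i j y.
Proof.
have [le_ji|lt_ij] := leqP j i; last by rewrite /lcoef leqNgt lt_ij.
by rewrite !lcoefE // (gbinom_conv_sym_const _ _ x y).
Qed.

Lemma lcoef_diag i x : lcoef i i x = 1.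
Proof. by rewrite lcoefE // subnn gbinom_conv0. Qed.

Lemma lcoef_col0 i x : lcoef i 0 x = (-1) ^+ i.
Proof.
have two_neq0 : (2 : R) != 0 by rewrite pnatr_eq0.
rewrite (lcoef_const i 0 x ((i%:R + 1) / 2)) lcoefE // subn0.
have -> : (i%:R - 1) / 2 + (i%:R + 1) / 2 = i%:R :> R by field.
have -> : (i%:R - 1) / 2 - (i%:R + 1) / 2 = -1 :> R by field.
exact: gbinom_conv_natN1.
Qed.

Lemma lcoef_pascal i j x : (j < i)%N ->
  lcoef i.+1 j.+1 x = lcoef i j x + lcoef i j.+1 x.
Proof.
move=> lt_ji; have le_ji := ltnW lt_ji.
have two_neq0 : (2 : R) != 0 by rewrite pnatr_eq0.
rewrite !(lcoef_const i _ x (x + 1 / 2)) !lcoefE ?ltnS //.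
rewrite subSS -(subnSK lt_ji) gbinom_convSr.
by congr (gbinom_conv _ _ _ + gbinom_conv _ _ _); rewrite -natr1; field.
Qed.

End LCoefficients.

Theorem proposition4p4 (R : numFieldType) (x : R) :
  (forall i : nat, lcoef i 0 x = (-1) ^+ i) /\
  (forall i : nat, lcoef i i x = 1) /\
  (forall i j : nat, (1 <= i)%N -> (1 <= j)%N -> (j <= i)%N ->
     lcoef i j x = lcoef i.-1 j.-1 x + lcoef i.-1 j x).
Proof.
split=> [i|]; first exact: lcoef_col0.
split=> [i|]; first exact: lcoef_diag.
case=> [//|i] [//|j] _ _ /=; rewrite ltnS leq_eqVlt => /predU1P [->|lt_ji].
  by rewrite !lcoef_diag /lcoef ltnn addr0.
exact: lcoef_pascal.
Qed.
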